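(* Let $v_{max}\in\mathbb{N}$, $V=\{1,\ldots,v_{max}\}$, $b>0$ and $K>0$. Let $f_{mort}:V\to(0,1)$ be any function, and let $f_{mut}:\{-v_{max},\ldots,0,\ldots,v_{max}\}\to[0,1]$ satisfy: $f_{mut}(-u)=f_{mut}(u)$ for all $u$; $u\mapsto f_{mut}(u)$ is decreasing for $u\geq 0$; and $\sum_{u=-v_{max}}^{v_{max}} f_{mut}(u)=1$. Let $P_0:V\to[0,\infty)$ and define $P_n:V\to[0,\infty)$ recursively by $$P_{n+1}(v)=(1-f_{mort}(v))P_n(v)+b\,(P_n\star f_{mut})(v)\left(1-\frac{\|P_n\|_1}{K}\right)\mathbf{1}_{[0,K]}(\|P_n\|_1),\qquad v=1,\ldots,v_{max},$$ where $(P_n\star f_{mut})(v)=\sum_{u=1}^{v_{max}}P_n(u)f_{mut}(v-u)$, $\|P_n\|_1=\sum_{v=1}^{v_{max}}P_n(v)$, and $\mathbf{1}_{[0,K]}$ is the indicator function of $[0,K]$. Define $F_{mut}(u)=\sum_{v=1}^{v_{max}}f_{mut}(v-u)$ for $u=1,\ldots,v_{max}$, and $$B_{up}:=\max\left(\frac{(\|1-f_{mort}\|_\infty+b\|F_{mut}\|_\infty)^2}{4b\|F_{mut}\|_\infty}\cdot K,\ K,\ \|P_0\|_1\right),$$ where $\|\cdot\|_\infty$ denotes the maximum norm (so $\|1-f_{mort}\|_\infty=\max_{v\in V}(1-f_{mort}(v))$ and $\|F_{mut}\|_\infty=\max_u F_{mut}(u)$). Then $\|P_n\|_1\leq B_{up}$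 for all $n\in\mathbb{N}_0$.
   Context: This is a discrete population model (a Verhulst-type model with a trait): $P_n(v)$ is the number of individuals in generation $n$ with trait value $v$, $b$ is the birth rate, $K$ the environmental capacity, $f_{mort}$ the trait-dependent mortality rate and $f_{mut}$ the mutation distribution. *)

From HB Require Import structures.
From mathcomp Require Import all_boot all_order all_algebra.
Set Implicit Arguments. Unset Strict Implicit. Unset Printing Implicit Defensive.
Import Order.TTheory GRing.Theory Num.Theory.
Local Open Scope ring_scope.

(* Traits are the naturals 1..vmax; functions on V are represented as nat -> R
   (values outside V are irrelevant). f_mut is a function on int (only the
   values on -vmax..vmax matter). *)

Definition norm1 {R : realFieldType} (vmax : nat) (P : nat -> R) : R :=
  \sum_(1 <= v < vmax.+1) P v.

Definition conv {R : realFieldType} (vmax : nat) (P : nat -> R) (fmut : int -> R)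
  (v : nat) : R :=
  \sum_(1 <= u < vmax.+1) P u * fmut (v%:Z - u%:Z).

Definition ind0K {R : realFieldType} (K x : R) : R :=
  if (0 <= x) && (x <= K) then 1 else 0.

Fixpoint Pop {R : realFieldType} (vmax : nat) (b K : R) (fmort : nat -> R)
  (fmut : int -> R) (P0 : nat -> R) (n : nat) : nat -> R :=
  match n with
  | 0 => P0
  | m.+1 => let P := Pop vmax b K fmort fmut P0 m in
      fun v => (1 - fmort v) * P v
               + b * conv vmax P fmut v * (1 - norm1 vmax P / K)
                 * ind0K K (norm1 vmax P)
  end.

Definition Fmut {R : realFieldType} (vmax : nat) (fmut : int -> R) (u : nat) : R :=
  \sum_(1 <= v < vmax.+1) fmut (v%:Z - u%:Z).

(* maximum over V = {1..vmax} of a function (all functions we apply this to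
   are nonnegative on V, so the neutral element 0 is harmless) *)
Definition supV {R : realFieldType} (vmax : nat) (g : nat -> R) : R :=
  \big[Num.max/0]_(1 <= v < vmax.+1) g v.

Definition Bup {R : realFieldType} (vmax : nat) (b K : R) (fmort : nat -> R)
  (fmut : int -> R) (P0 : nat -> R) : R :=
  let a := supV vmax (fun v => 1 - fmort v) in
  let F := supV vmax (Fmut vmax fmut) in
  Num.max (Num.max ((a + b * F) ^+ 2 / (4 * b * F) * K) K) (norm1 vmax P0).

(* Write S_n = ||P_n||_1, a = ||1 - f_mort||_oo and F = ||F_mut||_oo.  Summing the
   recursion over v and exchanging the two sums in the convolution gives
   S_(n+1) <= a S_n + b F S_n (1 - S_n/K) 1_[0,K](S_n).  For S_n > K this is
   a S_n <= S_n; for S_n <= K it is bounded by the vertex (a + bF)^2 K / (4bF) of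
   the parabola S |-> a S + b F S (1 - S/K) (or by K when F = 0).  Hence
   S_(n+1) <= max((a + bF)^2 K / (4bF), K, S_n), and induction on n concludes. *)
From Pilot Require Import Defs.
From HB Require Import structures.
From mathcomp Require Import all_boot all_order all_algebra.
From mathcomp Require Import zify ring.
Set Implicit Arguments.
Unset Strict Implicit.
Unset Printing Implicit Defensive.
Import Order.TTheory GRing.Theory Num.Theory.
Local Open Scope ring_scope.

Section MaxOverV.
Variables (R : realFieldType) (vmax : nat).

Lemma supV_ge0 (g : nat -> R) : 0 <= supV vmax g.
Proof. exact: bigmax_ge_id. Qed.

Lemma le_supV (g : nat -> R) v : (1 <= v <= vmax)%N -> g v <= supV vmax g.
Proof. by move=> Vv; apply: le_bigmax_seq; rewrite ?mem_index_iota. Qed.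

Lemma supV_le (g : nat -> R) c :
  0 <= c -> (forall v, (1 <= v <= vmax)%N -> g v <= c) -> supV vmax g <= c.
Proof. by move=> c_ge0 g_le; rewrite /supV big_nat; apply: bigmax_le. Qed.

End MaxOverV.

Lemma logistic_le_vertex (R : realFieldType) (a r K S : R) : 0 < r -> 0 < K ->
  a * S + r * S * (1 - S / K) <= (a + r) ^+ 2 / (4 * r) * K.
Proof.
move=> r_gt0 K_gt0; rewrite -subr_ge0.
have -> : (a + r) ^+ 2 / (4 * r) * K - (a * S + r * S * (1 - S / K))
    = r / K * (S - (a + r) * K / (2 * r)) ^+ 2.
  by field; rewrite !gt_eqF.
by rewrite mulr_ge0 ?sqr_ge0 ?divr_ge0 ?ltW.
Qed.

Section Population.
Variables (R : realFieldType) (vmax : nat) (b K : R).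
Variables (fmort : nat -> R) (fmut : int -> R).

Local Notation norm1 := (norm1 vmax).
Local Notation Fmut := (Fmut vmax fmut).
Local Notation a := (supV vmax (fun v => 1 - fmort v)).
Local Notation F := (supV vmax Fmut).

Definition nonnegV (P : nat -> R) := forall v, (1 <= v <= vmax)%N -> 0 <= P v.

Definition logistic_factor (S : R) := (1 - S / K) * ind0K K S.

Definition next_gen (P : nat -> R) (v : nat) : R :=
  (1 - fmort v) * P v
  + b * conv vmax P fmut v * (1 - norm1 P / K) * ind0K K (norm1 P).

Lemma PopS P0 n :
  Pop vmax b K fmort fmut P0 n.+1 = next_gen (Pop vmax b K fmort fmut P0 n).
Proof. by []. Qed.

Lemma norm1_ge0 P : nonnegV P -> 0 <= norm1 P.
Proof. by move=> P_ge0; rewrite /Defs.norm1 big_nat sumr_ge0. Qed.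

Lemma norm1_conv P :
  norm1 (conv vmax P fmut) = \sum_(1 <= u < vmax.+1) P u * Fmut u.
Proof.
by rewrite /Defs.norm1 /conv exchange_big; apply: eq_bigr => u _; rewrite mulr_sumr.
Qed.

Lemma norm1_next_gen P :
  norm1 (next_gen P) = \sum_(1 <= v < vmax.+1) (1 - fmort v) * P v
    + b * logistic_factor (norm1 P) * \sum_(1 <= u < vmax.+1) P u * Fmut u.
Proof.
rewrite -norm1_conv {1}/Defs.norm1 big_split /= mulr_sumr; congr (_ + _).
by apply: eq_bigr => v _; rewrite /logistic_factor; ring.
Qed.

Hypothesis b_gt0 : 0 < b.
Hypothesis K_gt0 : 0 < K.
Hypothesis fmort_in01 : forall v, (1 <= v <= vmax)%N -> 0 < fmort v < 1.
Hypothesis fmut_ge0 : forall u : int, `|u| <= vmax%:Z -> 0 <= fmut u.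

Lemma logistic_factor_ge0 S : 0 <= logistic_factor S.
Proof.
rewrite /logistic_factor /ind0K; case: ifP => [/andP[_ S_le_K]|_].
  by rewrite mulr1 subr_ge0 ler_pdivrMr // mul1r.
by rewrite mulr0.
Qed.

Lemma survival_ge0 v : (1 <= v <= vmax)%N -> 0 <= 1 - fmort v.
Proof. by move/fmort_in01 => /andP[_]; rewrite subr_ge0 => /ltW. Qed.

Lemma survival_sup_le1 : a <= 1.
Proof.
apply: supV_le => // v /fmort_in01 /andP[fmort_gt0 _].
by rewrite lerBlDr lerDl ltW.
Qed.

Lemma fmut_diff_ge0 u v :
  (1 <= u <= vmax)%N -> (1 <= v <= vmax)%N -> 0 <= fmut (v%:Z - u%:Z).
Proof. by move=> Vu Vv; apply: fmut_ge0; rewrite ler_norml; apply/andP; split; lia. Qed.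

Lemma conv_ge0 P v : nonnegV P -> (1 <= v <= vmax)%N -> 0 <= conv vmax P fmut v.
Proof.
move=> P_ge0 Vv; rewrite /conv big_nat sumr_ge0 // => u Vu.
by rewrite mulr_ge0 ?P_ge0 ?fmut_diff_ge0.
Qed.

Lemma next_gen_ge0 P : nonnegV P -> nonnegV (next_gen P).
Proof.
move=> P_ge0 v Vv; apply: addr_ge0; first by rewrite mulr_ge0 ?survival_ge0 ?P_ge0.
by rewrite -mulrA mulr_ge0 ?logistic_factor_ge0 // mulr_ge0 ?conv_ge0 ?ltW.
Qed.

Lemma Pop_ge0 P0 n : nonnegV P0 -> nonnegV (Pop vmax b K fmort fmut P0 n).
Proof.
by move=> P0_ge0; elim: n => // n IH; rewrite PopS; apply: next_gen_ge0.
Qed.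

Lemma norm1_next_gen_le P : nonnegV P ->
  norm1 (next_gen P) <= a * norm1 P + b * F * norm1 P * logistic_factor (norm1 P).
Proof.
move=> P_ge0; rewrite norm1_next_gen.
have -> : b * F * norm1 P * logistic_factor (norm1 P)
    = b * logistic_factor (norm1 P) * (F * norm1 P) by ring.
apply: lerD.
  rewrite /Defs.norm1 mulr_sumr.
  by apply: ler_sum_nat => v Vv; rewrite ler_wpM2r ?P_ge0 ?le_supV.
apply: ler_wpM2l; first by rewrite mulr_ge0 ?logistic_factor_ge0 ?ltW.
rewrite /Defs.norm1 mulr_sumr.
apply: ler_sum_nat => u Vu; rewrite [F * _]mulrC.
by apply: ler_wpM2l; [exact: P_ge0 | exact: le_supV].
Qed.

Lemma norm1_next_gen_le_max P : nonnegV P ->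
  norm1 (next_gen P)
    <= Num.max (Num.max ((a + b * F) ^+ 2 / (4 * b * F) * K) K) (norm1 P).
Proof.
move=> P_ge0; apply: le_trans (norm1_next_gen_le P_ge0) _.
set S := norm1 P; have S_ge0 : 0 <= S := norm1_ge0 P_ge0.
have aS_le_S : a * S <= S by rewrite ler_piMl ?survival_sup_le1.
have [S_le_K|K_lt_S] := lerP S K; last first.
  rewrite /logistic_factor /ind0K [S <= K]leNgt K_lt_S andbF !mulr0 addr0.
  by rewrite le_max aS_le_S orbT.
rewrite /logistic_factor /ind0K S_ge0 S_le_K mulr1 !le_max; apply/orP; left.
have [F0|F_neq0] := eqVneq F 0.
  by rewrite F0 mulr0 !mul0r addr0 (le_trans aS_le_S S_le_K) orbT.
have F_gt0 : 0 < F by rewrite lt_def F_neq0 supV_ge0.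
by rewrite -[4 * b * F]mulrA logistic_le_vertex ?mulr_gt0.
Qed.

End Population.

Theorem theorem2p1 (R : realFieldType) (vmax : nat) (b K : R)
  (fmort : nat -> R) (fmut : int -> R) (P0 : nat -> R) :
  0 < b -> 0 < K ->
  (forall v : nat, (1 <= v <= vmax)%N -> 0 < fmort v < 1) ->
  (forall u : int, `|u| <= vmax%:Z -> 0 <= fmut u <= 1) ->
  (forall u : int, `|u| <= vmax%:Z -> fmut (- u) = fmut u) ->
  (forall u w : int, 0 <= u -> u <= w -> w <= vmax%:Z -> fmut w <= fmut u) ->
  \sum_(0 <= i < (vmax.*2).+1) fmut (i%:Z - vmax%:Z) = 1 ->
  (forall v : nat, (1 <= v <= vmax)%N -> 0 <= P0 v) ->
  forall n : nat, norm1 vmax (Pop vmax b K fmort fmut P0 n) <= Bup vmax b K fmort fmut P0.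
Proof.
move=> b_gt0 K_gt0 fmort_in01 fmut_in01 _ _ _ P0_ge0.
have fmut_ge0 u : `|u| <= vmax%:Z -> 0 <= fmut u by case/fmut_in01/andP.
elim=> [|n IH]; first by rewrite /Bup le_max lexx orbT.
have Pn_ge0 := Pop_ge0 b_gt0 K_gt0 fmort_in01 fmut_ge0 n P0_ge0.
rewrite PopS.
apply: le_trans (norm1_next_gen_le_max fmut b_gt0 K_gt0 fmort_in01 Pn_ge0) _.
by rewrite ge_max IH andbT /Bup le_max lexx.
Qed.
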